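(* Fix $m\ge 0$. Work with smooth functions $\psi(u_0,u_1,\dots,u_N)$ of finitely many variables on domains with $u_0>0$, and let $D=\sum_{k\ge 0}u_{k+1}\frac{\partial}{\partial u_k}$ be the total derivative (so that, along $u_k=q^{(k)}(x)$, $D$ acts as $\frac{d}{dx}$). Define operators $$E=\sum_j u_j\frac{\partial}{\partial u_j},\qquad \Lambda=\sum_j(-1)^{j+1}D^j\frac{\partial}{\partial u_j},\qquad L=\sum_j(-1)^jD^j\Big(u_0\frac{\partial}{\partial u_j}\,\cdot\Big).$$ Let $\phi=\phi(u_0,\dots,u_m)$ be smooth with $E\phi=\phi$, i.e. $\phi=\sum_{j=0}^m u_j\frac{\partial\phi}{\partial u_j}$, and let $$S=\Lambda\phi=\sum_{j=0}^m(-1)^{j+1}D^j\frac{\partial\phi}{\partial u_j},$$ a function of $(u_0,\dots,u_{2m})$. Then $$LS=\sum_{j=0}^{2m}(-1)^jD^j\Big(u_0\frac{\partial S}{\partial u_j}\Big)=0 .$$ *)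

From HB Require Import structures.
From mathcomp Require Import all_boot all_order all_algebra.
From mathcomp Require Import all_classical all_reals all_analysis.
Set Implicit Arguments. Unset Strict Implicit. Unset Printing Implicit Defensive.
Import Order.TTheory GRing.Theory Num.Theory.
Import numFieldNormedType.Exports.
Local Open Scope ring_scope.

Section JetSpace.
Variable R : realType.

(* A point of the jet space: the sequence of coordinates (u_0, u_1, u_2, ...). *)
Local Notation jet := {ptws nat -> R}.

Definition shift (u : jet) (j : nat) (t : R) : jet :=
  fun i => if i == j then u i + t else u i.

Definition partial (j : nat) (psi : jet -> R) : jet -> R :=
  fun u => derive1 (fun t : R => psi (shift u j t)) 0.

Fixpoint iterp (js : seq nat) (psi : jet -> R) : jet -> R :=
  match js with
  | [::] => psi
  | j :: js' => partial j (iterp js' psi)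
  end.

Definition depends_upto (n : nat) (psi : jet -> R) : Prop :=
  forall u v : jet, (forall i, (i <= n)%N -> u i = v i) -> psi u = psi v.

Definition smooth_pos (psi : jet -> R) : Prop :=
  forall (js : seq nat) (u : jet), 0 < u 0%N ->
    {for u, continuous (iterp js psi)} /\
    forall j : nat, derivable (fun t : R => iterp js psi (shift u j t)) 0 1.

(* The total derivative D = sum_k u_{k+1} d/du_k, truncated to k < K
   (this is exactly D on functions depending only on u_0, ..., u_{K-1}). *)
Definition totalD (K : nat) (psi : jet -> R) : jet -> R :=
  fun u => \sum_(k < K) u k.+1 * partial k psi u.

Definition euler_hom (m : nat) (phi : jet -> R) : Prop :=
  forall u : jet, 0 < u 0%N -> phi u = \sum_(j < m.+1) u j * partial j phi u.

Definition Lambda_op (K m : nat) (phi : jet -> R) : jet -> R :=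
  fun u => \sum_(j < m.+1) (-1) ^+ j.+1 * iter j (totalD K) (partial j phi) u.

Definition L_op (K n : nat) (S : jet -> R) : jet -> R :=
  fun u => \sum_(j < n.+1)
    (-1) ^+ j * iter j (totalD K) (fun v : jet => v 0%N * partial j S v) u.

End JetSpace.

(* Write EL_N psi = \sum_(j <= N) (-1)^j D^j (partial j psi) for the
   Euler-Lagrange operator.  Since partial j (u_0 S) = u_0 partial j S + [j = 0] S,
   one has L S = EL_2m (u_0 S) - S.  Integrating by parts j times gives
   u_j y = D (B_j y) + (-1)^j u_0 D^j y for explicit boundary terms B_j y;
   summing against partial j phi and using Euler's relation
   phi = \sum_j u_j partial j phi yields u_0 S = D A - phi, where A depends
   only on u_0, ..., u_(2m-1).  Euler-Lagrange operators kill such total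
   derivatives (the sum telescopes because partial l \o D = D \o partial l +
   partial l.-1, by the symmetry of mixed partials), and EL_2m phi = -S,
   so L S = S - S = 0. *)

From Pilot Require Import Defs.
From HB Require Import structures.
From mathcomp Require Import all_boot all_order all_algebra.
From mathcomp Require Import all_classical all_reals all_analysis.
From mathcomp Require Import ring lra zify.
Import Order.TTheory GRing.Theory Num.Theory.
Import numFieldNormedType.Exports.
Local Open Scope ring_scope.
Local Open Scope classical_set_scope.
Set Implicit Arguments. Unset Strict Implicit. Unset Printing Implicit Defensive.

Section MixedPartials.
Variable R : realType.

Lemma MVT_origin (f df : R -> R) (r h : R) : 0 < h -> h < r ->
  (forall x, `|x| < r -> is_derive x (1 : R) f (df x)) ->
  exists2 c, 0 < c < h & f h - f 0 = df c * h.
Proof.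
move=> h0 hr fd.
have hin x : x \in `[0, h]%R -> `|x| < r.
  by rewrite in_itv /= => /andP[x0 xh]; rewrite ger0_norm //; lra.
have Hd x : x \in `]0, h[%R -> is_derive x (1 : R) f (df x).
  by move=> xin; apply/fd/hin; apply: subset_itv_oo_cc.
have Hc : {within [set` `[0, h]%R], continuous f}.
  by apply: derivable_within_continuous => x /hin /fd [].
have [c cin E] := MVT h0 Hd Hc.
by exists c; [move: cin; rewrite in_itv | rewrite E subr0].
Qed.

Lemma is_derive_translate (f : R -> R) s :
  derivable (fun x => f (x + s)) 0 1 ->
  is_derive s (1 : R) f ('D_1 (fun x => f (x + s)) 0).
Proof.
have quotE : (fun h : R => h^-1 *: ((f \o shift s) (h *: 1) - f s)) =
   (fun h : R => h^-1 *: (((fun x => f (x + s)) \o shift 0) (h *: 1) - f (0 + s))).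
  by apply: funext => h /=; rewrite addr0 add0r.
by move=> df; apply: DeriveDef; rewrite /derivable /derive quotE.
Qed.

Definition continuous_at_origin2 (k : R -> R -> R) : Prop :=
  forall e, 0 < e -> exists2 d, 0 < d &
    forall s t, `|s| < d -> `|t| < d -> `|k s t - k 0 0| < e.

(* Schwarz–Clairaut on a square around the origin: both mixed partials are
   values of [Delta h / h^2] at points of [(0, h)^2], where
   [Delta h = g h h - g h 0 - g 0 h + g 0 0]. *)
Lemma clairaut (g gs gt gst gts : R -> R -> R) (r : R) : 0 < r ->
  (forall s t, `|s| < r -> `|t| < r -> is_derive s (1 : R) (g^~ t) (gs s t)) ->
  (forall s t, `|s| < r -> `|t| < r -> is_derive t (1 : R) (g s) (gt s t)) ->
  (forall s t, `|s| < r -> `|t| < r -> is_derive t (1 : R) (gs s) (gst s t)) ->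
  (forall s t, `|s| < r -> `|t| < r -> is_derive s (1 : R) (gt^~ t) (gts s t)) ->
  continuous_at_origin2 gst -> continuous_at_origin2 gts ->
  gst 0 0 = gts 0 0.
Proof.
move=> r0 Hs Ht Hst Hts Cst Cts.
have lt_r (h d x : R) : h < d -> 0 < x < h -> `|x| < d.
  by move=> hd /andP[x0 xh]; rewrite ger0_norm ?ltW //; lra.
have mixed_eq h : 0 < h -> h < r -> exists s1 t1 s2 t2,
    [/\ 0 < s1 < h, 0 < t1 < h, 0 < s2 < h, 0 < t2 < h & gst s1 t1 = gts s2 t2].
  move=> h0 hr; have hh : `|h| < r by rewrite ger0_norm ?ltW.
  have h0r : `|0 : R| < r by rewrite normr0.
  have [s1 s1in E1] := @MVT_origin (fun x => g x h - g x 0)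
       (fun x => gs x h - gs x 0) r h h0 hr
       (fun x xr => is_deriveB (Hs x h xr hh) (Hs x 0 xr h0r)).
  have [t1 t1in E2] := @MVT_origin (gs s1) (gst s1) r h h0 hr
       (fun y yr => Hst s1 y (lt_r _ _ _ hr s1in) yr).
  have [t2 t2in E3] := @MVT_origin (fun y => g h y - g 0 y)
       (fun y => gt h y - gt 0 y) r h h0 hr
       (fun y yr => is_deriveB (Ht h y hh yr) (Ht 0 y h0r yr)).
  have [s2 s2in E4] := @MVT_origin (gt^~ t2) (gts^~ t2) r h h0 hr
       (fun x xr => Hts x t2 xr (lt_r _ _ _ hr t2in)).
  exists s1, t1, s2, t2; split => //.
  have hn : h != 0 by rewrite gt_eqF.
  apply: (mulIf hn); apply: (mulIf hn).
  by rewrite -E2 -E4 -E1 -E3; ring.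
apply/eqP; rewrite -subr_eq0 -normr_eq0 eq_le normr_ge0 andbT.
apply/unstable.ler_gtP => z z0.
have z2 : 0 < z / 2 by lra.
have [d1 d10 C1] := Cst _ z2; have [d2 d20 C2] := Cts _ z2.
pose M := Num.min r (Num.min d1 d2); pose h := M / 2.
have M0 : 0 < M by rewrite !lt_min r0 d10 d20.
have hpos : 0 < h by rewrite /h; lra.
have hmin : h < M by rewrite /h; lra.
move: hmin; rewrite !lt_min => /and3P[hr hd1 hd2].
have [s1 [t1 [s2 [t2 [s1in t1in s2in t2in E]]]]] := mixed_eq h hpos hr.
have A1 := C1 s1 t1 (lt_r _ _ _ hd1 s1in) (lt_r _ _ _ hd1 t1in).
have A2 := C2 s2 t2 (lt_r _ _ _ hd2 s2in) (lt_r _ _ _ hd2 t2in).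
rewrite E in A1.
have := ler_normD (gst 0 0 - gts s2 t2) (gts s2 t2 - gts 0 0).
rewrite distrC in A1; rewrite -addrA (addrA (- _)) addNr add0r; lra.
Qed.

End MixedPartials.

Section JetSpace.
Variable R : realType.
Local Notation jet := {ptws nat -> R}.
Local Notation shift := (@Defs.shift R).
Implicit Types (f g h y phi psi S A : jet -> R) (u v : jet) (c : R).

Definition pos_jet : pred jet := fun u => 0 < u 0%N.

Definition pderivable j f u := derivable (fun t : R => f (shift u j t)) 0 1.

Definition regular f :=
  forall u, 0 < u 0%N -> {for u, continuous f} /\ forall j, pderivable j f u.

Lemma shift0 u j : shift u j 0 = u.
Proof. by apply: funext => k; rewrite /Defs.shift; case: eqP; rewrite ?addr0. Qed.

Lemma shiftD u j s t : shift (shift u j s) j t = shift u j (s + t).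
Proof. by apply: funext => k; rewrite /Defs.shift; case: eqP; rewrite ?addrA. Qed.

Lemma shiftC u i j s t : i != j -> shift (shift u i s) j t = shift (shift u j t) i s.
Proof.
move=> ij; apply: funext => k; rewrite /Defs.shift.
by have [->|//] := eqVneq k j; rewrite eq_sym (negbTE ij).
Qed.

Lemma near_pos_shift u j : 0 < u 0%N -> \forall t \near 0, 0 < shift u j t 0%N.
Proof.
move=> pu; have := @nbhs0_lt _ R _ pu; apply: filterS => t /=.
by rewrite /Defs.shift; case: eqP => // _; rewrite ltr_norml => /andP[? _]; lra.
Qed.

Lemma near_pos_jet u : 0 < u 0%N -> \forall v \near u, 0 < v 0%N.
Proof.
have proj0 : (fun v : jet => v 0%N) @ u --> u 0%N.
  exact: (@proj_continuous nat (fun _ => R) 0%N u).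
exact: cvgr_gt proj0 0.
Qed.

Lemma pos_shift2 u i j s t : i != j -> 0 < u 0%N ->
  `|s| < u 0%N -> `|t| < u 0%N -> 0 < shift (shift u i s) j t 0%N.
Proof.
move=> ij pu; rewrite !ltr_norml /Defs.shift => /andP[s1 _] /andP[t1 _].
case: eqP => [j0|_]; case: eqP => [i0|_] //; try lra.
by move: ij; rewrite -i0 -j0 eqxx.
Qed.

Lemma eq_partial_pos j f g :
  {in pos_jet, f =1 g} -> {in pos_jet, partial j f =1 partial j g}.
Proof.
move=> fg u pu; rewrite /partial !derive1E; apply: near_eq_derive.
by near=> t; rewrite fg //; near: t; exact: near_pos_shift.
Unshelve. all: by end_near. Qed.

Lemma eq_pderivable_pos j f g u : {in pos_jet, f =1 g} -> 0 < u 0%N ->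
  pderivable j f u -> pderivable j g u.
Proof.
move=> fg pu; apply: near_eq_derivable.
by near=> t; rewrite fg //; near: t; exact: near_pos_shift.
Unshelve. all: by end_near. Qed.

Lemma eq_regular_pos f g : {in pos_jet, f =1 g} -> regular f -> regular g.
Proof.
move=> fg rf u pu; have [cf df] := rf u pu.
split=> [|j]; last exact: eq_pderivable_pos fg pu (df j).
have fg_near : \forall v \near u, f v = g v.
  by near=> v; rewrite fg //; near: v; exact: near_pos_jet.
have := cvg_trans (near_eq_cvg fg_near) cf.
by rewrite (fg u pu) => /(_ (nbhs_filter u)).
Unshelve. all: by end_near. Qed.

Lemma partialE j f u : partial j f u = 'D_1 (fun t : R => f (shift u j t)) 0.
Proof. by rewrite /partial derive1E. Qed.

Lemma partial_cst j c u : partial j (fun=> c) u = 0.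
Proof. by rewrite partialE derive_cst. Qed.

Lemma pderivable_cst j c u : pderivable j (fun=> c) u.
Proof. exact: derivable_cst. Qed.

Lemma shift_coord u i j :
  (fun t : R => shift u j t i) = if i == j then (cst (u i) + id)%R else cst (u i).
Proof. by apply: funext => t; rewrite /Defs.shift; case: (i == j). Qed.

Lemma partial_coord i j u : partial j (fun v : jet => v i) u = (i == j)%:R.
Proof.
rewrite partialE shift_coord; case: (i == j); last by rewrite derive_cst.
by rewrite deriveD ?derive_cst ?derive_id ?add0r.
Qed.

Lemma pderivable_coord i j u : pderivable j (fun v => v i) u.
Proof.
rewrite /pderivable shift_coord; case: (i == j); last exact: derivable_cst.
by apply: derivableD; [exact: derivable_cst | exact: derivable_id].
Qed.

Lemma pderivableD j f g u : pderivable j f u -> pderivable j g u ->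
  pderivable j (fun v => f v + g v) u.
Proof. by move=> df dg; exact: (derivableD df dg). Qed.

Lemma partialD j f g u : pderivable j f u -> pderivable j g u ->
  partial j (fun v => f v + g v) u = partial j f u + partial j g u.
Proof. by move=> df dg; rewrite !partialE (deriveD df dg). Qed.

Lemma pderivableM j f g u : pderivable j f u -> pderivable j g u ->
  pderivable j (fun v => f v * g v) u.
Proof. by move=> df dg; exact: (derivableM df dg). Qed.

Lemma partialM j f g u : pderivable j f u -> pderivable j g u ->
  partial j (fun v => f v * g v) u = f u * partial j g u + g u * partial j f u.
Proof. by move=> df dg; rewrite !partialE (deriveM df dg) /= shift0. Qed.

Lemma pderivableZ j c f u : pderivable j f u -> pderivable j (fun v => c * f v) u.
Proof.
by move=> df; apply: (@pderivableM _ (fun=> c) _ _ _ df); exact: pderivable_cst.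
Qed.

Lemma partialZ j c f u : pderivable j f u ->
  partial j (fun v => c * f v) u = c * partial j f u.
Proof. by move=> df; rewrite !partialE (deriveMl c df). Qed.

Lemma partial_sum j n (F : nat -> jet -> R) u : (forall k, pderivable j (F k) u) ->
  partial j (fun v => \sum_(k < n) F k v) u = \sum_(k < n) partial j (F k) u
  /\ pderivable j (fun v => \sum_(k < n) F k v) u.
Proof.
move=> dF; elim: n => [|n [IH1 IH2]].
  have -> : (fun v : jet => \sum_(k < 0) F k v) = fun=> 0.
    by apply: funext => v; rewrite big_ord0.
  by rewrite big_ord0 partial_cst; split => //; apply: pderivable_cst.
have -> : (fun v : jet => \sum_(k < n.+1) F k v) = (fun v => \sum_(k < n) F k v + F n v).
  by apply: funext => v; rewrite big_ord_recr.
rewrite big_ord_recr (partialD IH2 (dF n)) IH1; split => //.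
exact: (pderivableD IH2 (dF n)).
Qed.

Lemma partial_eq0_shift j f u : (forall t, f (shift u j t) = f u) -> partial j f u = 0.
Proof.
move=> fj; rewrite partialE.
have -> : (fun t => f (shift u j t)) = cst (f u) by apply: funext.
exact: derive_cst.
Qed.

Lemma depends_upto_shift n j f u t : depends_upto n f -> (n < j)%N ->
  f (shift u j t) = f u.
Proof.
move=> df nj; apply: df => i le_in; rewrite /Defs.shift.
by case: eqP => // ij; lia.
Qed.

Lemma partial_eq0 n j f u : depends_upto n f -> (n < j)%N -> partial j f u = 0.
Proof.
by move=> df nj; apply: partial_eq0_shift => t; apply: depends_upto_shift df nj.
Qed.

Lemma depends_upto_partial n j f : depends_upto n f -> depends_upto n (partial j f).
Proof.
move=> df u v uv; rewrite /partial.
have -> : (fun t => f (shift u j t)) = (fun t => f (shift v j t)) => //.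
by apply: funext => t; apply: df => i le_in; rewrite /Defs.shift uv.
Qed.

Lemma iterp_rcons js j f : iterp (rcons js j) f = iterp js (partial j f).
Proof. by elim: js => //= k js ->. Qed.

Lemma smooth_posP f : smooth_pos f <-> forall js, regular (iterp js f).
Proof. exact: iff_refl. Qed.

Lemma smooth_pderivable f j u : smooth_pos f -> 0 < u 0%N -> pderivable j f u.
Proof. by move=> sf pu; have [_] := sf [::] u pu; apply. Qed.

Lemma smooth_iterp js f : smooth_pos f -> smooth_pos (iterp js f).
Proof.
elim: js => [//|j js IH] sf; apply/smooth_posP => ks.
by have := IH sf (rcons ks j); rewrite iterp_rcons.
Qed.

Lemma smooth_partial j f : smooth_pos f -> smooth_pos (partial j f).
Proof. by move=> sf js; rewrite -iterp_rcons; apply: sf. Qed.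

Lemma regular_cst c : regular (fun=> c).
Proof.
move=> u pu; split=> [|j]; last exact: pderivable_cst.
have FF : Filter (nbhs u) := nbhs_filter u; exact: cvg_cst.
Qed.

Lemma regular_add f g : regular f -> regular g -> regular (fun v => f v + g v).
Proof.
move=> rf rg u pu; have [cf df] := rf u pu; have [cg dg] := rg u pu.
split=> [|j]; last exact: pderivableD.
have FF : Filter (nbhs u) := nbhs_filter u; exact: (cvgD cf cg).
Qed.

Lemma regular_coordM i f : regular f -> regular (fun v => v i * f v).
Proof.
move=> rf u pu; have [cf df] := rf u pu.
split=> [|j]; last by apply: pderivableM => //; exact: pderivable_coord.
have FF : Filter (nbhs u) := nbhs_filter u; apply: (cvgM _ cf).
exact: (@proj_continuous nat (fun _ => R) i u).
Qed.

Lemma regular_scale c f : regular f -> regular (fun v => c * f v).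
Proof.
move=> rf u pu; have [cf df] := rf u pu.
split=> [|j]; last exact: pderivableZ.
have FF : Filter (nbhs u) := nbhs_filter u; exact: (cvgM (cvg_cst c) cf).
Qed.

Lemma smooth_cst c : smooth_pos (fun=> c).
Proof.
apply/smooth_posP => js.
suff [c' ->] : exists c', iterp js (fun=> c) = fun=> c' by apply: regular_cst.
elim: js => [|j js [c' IH]] /=; first by exists c.
by exists 0; rewrite IH; apply: funext => u; rewrite partial_cst.
Qed.

Lemma smooth_add f g : smooth_pos f -> smooth_pos g -> smooth_pos (fun v => f v + g v).
Proof.
move=> sf sg; apply/smooth_posP => js.
suff E : {in pos_jet,
    (fun v => iterp js f v + iterp js g v) =1 iterp js (fun v => f v + g v)}.
  by apply: eq_regular_pos E _; apply: regular_add; [exact: (sf js) | exact: (sg js)].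
elim: js => [|j js IH] //= u pu.
rewrite -(eq_partial_pos j IH pu) partialD //; apply: smooth_pderivable pu;
  exact: smooth_iterp.
Qed.

Lemma smooth_scale c f : smooth_pos f -> smooth_pos (fun v => c * f v).
Proof.
move=> sf; apply/smooth_posP => js.
suff E : {in pos_jet, (fun v => c * iterp js f v) =1 iterp js (fun v => c * f v)}.
  by apply: eq_regular_pos E _; apply: regular_scale; exact: (sf js).
elim: js => [|j js IH] //= u pu.
by rewrite -(eq_partial_pos j IH pu) partialZ //; apply: smooth_pderivable pu;
  exact: smooth_iterp.
Qed.

(* Induction invariant: [iterp js (u_i f) = u_i iterp js f + g] with [g] smooth. *)
Lemma smooth_coordM i f : smooth_pos f -> smooth_pos (fun v => v i * f v).
Proof.
move=> sf.
suff H js : exists2 g, smooth_pos g &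
  {in pos_jet, (fun v => v i * iterp js f v + g v) =1 iterp js (fun v => v i * f v)}.
  apply/smooth_posP => js; have [g sg E] := H js.
  apply: eq_regular_pos E _; apply: regular_add; last exact: (sg [::]).
  by apply: regular_coordM; exact: (sf js).
elim: js => [|j js [g sg IH]] /=.
  by exists (fun=> 0); [exact: smooth_cst | move=> u _; rewrite addr0].
exists (fun v => (i == j)%:R * iterp js f v + partial j g v).
  by apply: smooth_add; [apply/smooth_scale/smooth_iterp | apply: smooth_partial].
move=> u pu; rewrite -(eq_partial_pos j IH pu).
have dF : pderivable j (iterp js f) u by apply: smooth_pderivable pu; exact: smooth_iterp.
rewrite partialD; last 2 first.
- by apply: pderivableM => //; exact: pderivable_coord.
- exact: smooth_pderivable.
by rewrite partialM ?partial_coord //; [ring | exact: pderivable_coord].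
Qed.

Lemma smooth_sum n (F : nat -> jet -> R) : (forall k, smooth_pos (F k)) ->
  smooth_pos (fun v => \sum_(k < n) F k v).
Proof.
move=> sF; elim: n => [|n IH].
  have -> : (fun v : jet => \sum_(k < 0) F k v) = fun=> 0.
    by apply: funext => v; rewrite big_ord0.
  exact: smooth_cst.
have -> : (fun v : jet => \sum_(k < n.+1) F k v) = (fun v => \sum_(k < n) F k v + F n v).
  by apply: funext => v; rewrite big_ord_recr.
exact: (smooth_add IH (sF n)).
Qed.

Lemma cvg_shift2 u i j :
  (fun p : R * R => shift (shift u i p.1) j p.2) @ filter_prod (nbhs 0) (nbhs 0) --> u.
Proof.
have FF : Filter (filter_prod (nbhs (0 : R)) (nbhs (0 : R))) by apply: filter_prod_filter.
apply/pointwise_cvgP => k.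
suff : (fun p : R * R => (shift (shift u i p.1) j p.2 : jet) k)
  @ filter_prod (nbhs 0) (nbhs 0) --> u k by [].
have -> : (fun p : R * R => (shift (shift u i p.1) j p.2 : jet) k) =
    (fun p => u k + ((k == i)%:R * p.1 + (k == j)%:R * p.2)).
  apply: funext => p; rewrite /Defs.shift.
  by case: (k == j); case: (k == i); rewrite /= ?mul1r ?mul0r ?addr0 ?add0r ?addrA.
have lim : (fun p : R * R => u k + ((k == i)%:R * p.1 + (k == j)%:R * p.2))
    @ filter_prod (nbhs 0) (nbhs 0) --> u k + ((k == i)%:R * 0 + (k == j)%:R * 0).
  apply: cvgD; first exact: cvg_cst.
  by apply: cvgD; apply: cvgMl_tmp; [exact: cvg_fst | exact: cvg_snd].
by rewrite !mulr0 !addr0 in lim.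
Qed.

Lemma continuous_at_origin2_shift (G : jet -> R) u i j : {for u, continuous G} ->
  continuous_at_origin2 (fun s t => G (shift (shift u i s) j t)).
Proof.
move=> cG e e0; rewrite !shift0.
pose F := filter_prod (nbhs (0 : R)) (nbhs (0 : R)).
have FF : Filter F by apply: filter_prod_filter.
have FU : Filter (nbhs u) := nbhs_filter u.
have lim := cvg_comp _ _ (@cvg_shift2 u i j) cG.
have := @cvgr_dist_lt _ _ _ F FF _ _ lim e e0.
case=> [[A B] /= [nA nB] AB].
have [dA dA0 bA] := (nbhs_ballP _ _).1 nA.
have [dB dB0 bB] := (nbhs_ballP _ _).1 nB.
exists (Num.min dA dB) => [|s t]; first by rewrite lt_min dA0 dB0.
rewrite !lt_min => /andP[sA _] /andP[_ tB].
have : (A `*` B) (s, t).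
  by split; [apply: bA | apply: bB]; rewrite /ball /= sub0r normrN.
by move/AB; rewrite distrC.
Qed.

Lemma is_derive_shift2l F u i j s t : i != j ->
  pderivable i F (shift (shift u i s) j t) ->
  is_derive s (1 : R) (fun x => F (shift (shift u i x) j t))
    (partial i F (shift (shift u i s) j t)).
Proof.
move=> ij dF.
have E : (fun x => F (shift (shift (shift u i s) j t) i x)) =
    (fun x => F (shift (shift u i (x + s)) j t)).
  by apply: funext => x; rewrite -(shiftC _ _ _ ij) shiftD addrC.
by rewrite partialE E; apply: is_derive_translate; rewrite -E.
Qed.

Lemma is_derive_shift2r F u i j s t :
  pderivable j F (shift (shift u i s) j t) ->
  is_derive t (1 : R) (fun x => F (shift (shift u i s) j x))
    (partial j F (shift (shift u i s) j t)).
Proof.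
move=> dF; rewrite partialE.
have E : (fun x => F (shift (shift (shift u i s) j t) j x)) =
    (fun x => F (shift (shift u i s) j (x + t))).
  by apply: funext => x; rewrite shiftD addrC.
by rewrite E; apply: is_derive_translate; rewrite -E.
Qed.

Lemma partialC i j f u : smooth_pos f -> 0 < u 0%N ->
  partial i (partial j f) u = partial j (partial i f) u.
Proof.
move=> sf pu; have [->//|ij] := eqVneq i j.
have shift00 : shift (shift u i 0) j 0 = u by rewrite !shift0.
have dsmooth F k s t : smooth_pos F -> `|s| < u 0%N -> `|t| < u 0%N ->
    pderivable k F (shift (shift u i s) j t).
  by move=> sF hs ht; apply: smooth_pderivable sF _; exact: pos_shift2.
have := @clairaut _ (fun s t => f (shift (shift u i s) j t))
  (fun s t => partial i f (shift (shift u i s) j t))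
  (fun s t => partial j f (shift (shift u i s) j t))
  (fun s t => partial j (partial i f) (shift (shift u i s) j t))
  (fun s t => partial i (partial j f) (shift (shift u i s) j t)) (u 0%N) pu.
move=> H; rewrite /= shift00 in H; symmetry; apply: H.
- by move=> s t hs ht; apply: is_derive_shift2l ij (dsmooth _ _ _ _ sf hs ht).
- by move=> s t hs ht; apply: is_derive_shift2r (dsmooth _ _ _ _ sf hs ht).
- move=> s t hs ht; apply: is_derive_shift2r.
  exact: dsmooth (smooth_partial i sf) hs ht.
- move=> s t hs ht; apply: is_derive_shift2l ij _.
  exact: dsmooth (smooth_partial j sf) hs ht.
- exact: continuous_at_origin2_shift (sf [:: j; i] u pu).1.
- exact: continuous_at_origin2_shift (sf [:: i; j] u pu).1.
Qed.

Section TotalDerivative.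
Variable K : nat.
Local Notation D := (totalD K).

Lemma smooth_totalD f : smooth_pos f -> smooth_pos (D f).
Proof.
move=> sf; apply: (@smooth_sum K (fun k v => v k.+1 * partial k f v)) => k.
by apply: smooth_coordM; exact: smooth_partial.
Qed.

Lemma smooth_iter_totalD n f : smooth_pos f -> smooth_pos (iter n D f).
Proof. by move=> sf; elim: n => [//|n IH]; exact: smooth_totalD. Qed.

Lemma eq_iter_totalD_pos n f g :
  {in pos_jet, f =1 g} -> {in pos_jet, iter n D f =1 iter n D g}.
Proof.
move=> fg; elim: n => //= n IH u pu; apply: eq_bigr => k _.
by rewrite (eq_partial_pos k IH pu).
Qed.

Lemma iter_totalD0 n : iter n D (fun _ : jet => 0 : R) = fun=> 0.
Proof.
elim: n => //= n ->; apply: funext => u.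
by rewrite /totalD big1 // => k _; rewrite partial_cst mulr0.
Qed.

Lemma iter_totalD_lin n a b f g : smooth_pos f -> smooth_pos g ->
  {in pos_jet, iter n D (fun v => a * f v + b * g v) =1
               (fun v => a * iter n D f v + b * iter n D g v)}.
Proof.
move=> sf sg; elim: n => [//|n IH] u pu.
have -> : iter n.+1 D (fun v => a * f v + b * g v) u =
    D (fun v => a * iter n D f v + b * iter n D g v) u.
  exact: (eq_iter_totalD_pos 1 IH pu).
rewrite /= /totalD !mulr_sumr -big_split /=.
apply: eq_bigr => k _.
have [dfk dgk] : pderivable k (iter n D f) u /\ pderivable k (iter n D g) u.
  by split; apply: smooth_pderivable pu; exact: smooth_iter_totalD.
rewrite (partialD (pderivableZ (c := a) dfk) (pderivableZ (c := b) dgk)).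
by rewrite (partialZ a dfk) (partialZ b dgk); ring.
Qed.

Lemma iter_totalD_add n f g : smooth_pos f -> smooth_pos g ->
  {in pos_jet, iter n D (fun v => f v + g v) =1 (fun v => iter n D f v + iter n D g v)}.
Proof.
move=> sf sg u pu; have := iter_totalD_lin n 1 1 sf sg pu.
have -> : (fun v => 1 * f v + 1 * g v) = (fun v => f v + g v).
  by apply: funext => v; rewrite !mul1r.
by rewrite !mul1r.
Qed.

Lemma totalD_sum n (F : nat -> jet -> R) : (forall k, smooth_pos (F k)) ->
  {in pos_jet, D (fun v => \sum_(k < n) F k v) =1 (fun v => \sum_(k < n) D (F k) v)}.
Proof.
move=> sF; elim: n => [|n IH] u pu.
  rewrite big_ord0; have -> : (fun v : jet => \sum_(k < 0) F k v) = fun=> 0.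
    by apply: funext => v; rewrite big_ord0.
  by have /= -> := iter_totalD0 1.
have -> : (fun v : jet => \sum_(k < n.+1) F k v) = (fun v => \sum_(k < n) F k v + F n v).
  by apply: funext => v; rewrite big_ord_recr.
rewrite big_ord_recr /= -(IH u pu).
exact: (iter_totalD_add 1 (smooth_sum n sF) (sF n) pu).
Qed.

Lemma totalD_coordM i f : (i < K)%N -> smooth_pos f ->
  {in pos_jet, D (fun v => v i * f v) =1 (fun v => v i.+1 * f v + v i * D f v)}.
Proof.
move=> iK sf u pu; rewrite /totalD.
have E (k : 'I_K) : u k.+1 * partial k (fun v => v i * f v) u =
    u k.+1 * ((i == k)%:R * f u) + u i * (u k.+1 * partial k f u).
  rewrite (partialM (@pderivable_coord i k u) (smooth_pderivable sf pu)).
  by rewrite partial_coord; ring.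
rewrite (eq_bigr _ (fun k _ => E k)) big_split /= -mulr_sumr; congr (_ + _).
rewrite (bigD1 (Ordinal iK)) //= eqxx mul1r big1 ?addr0 // => k.
by rewrite -(inj_eq val_inj) /= eq_sym => /negbTE ->; rewrite mul0r mulr0.
Qed.

(* [partial l (D f) = D (partial l f) + partial l.-1 f], the last term absent
   for [l = 0]; the symmetry of mixed partials is what makes this work. *)
Lemma partial_totalD l f : smooth_pos f ->
  {in pos_jet, partial l (D f) =1
     (fun v => \sum_(k < K) (k.+1 == l)%:R * partial k f v + D (partial l f) v)}.
Proof.
move=> sf u pu; rewrite /totalD.
have dk k : pderivable l (fun v => v k.+1 * partial k f v) u.
  apply: pderivableM (@pderivable_coord _ _ _) _.
  exact: smooth_pderivable (smooth_partial k sf) pu.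
rewrite (partial_sum K dk).1 -big_split /=; apply: eq_bigr => k _.
rewrite (partialM (@pderivable_coord _ _ _) (smooth_pderivable (smooth_partial k sf) pu)).
by rewrite partial_coord (partialC l k sf pu); ring.
Qed.

Lemma partial0_totalD f : smooth_pos f ->
  {in pos_jet, partial 0 (D f) =1 D (partial 0 f)}.
Proof.
move=> sf u pu; rewrite (partial_totalD 0 sf pu) big1 ?add0r // => k _.
by rewrite mul0r.
Qed.

Lemma partialS_totalD j f : (j < K)%N -> smooth_pos f ->
  {in pos_jet, partial j.+1 (D f) =1 (fun v => partial j f v + D (partial j.+1 f) v)}.
Proof.
move=> jK sf u pu; rewrite (partial_totalD j.+1 sf pu); congr (_ + _).
rewrite (bigD1 (Ordinal jK)) //= eqxx mul1r big1 ?addr0 // => k.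
by rewrite -(inj_eq val_inj) /= eqSS => /negbTE ->; rewrite mul0r.
Qed.

Lemma depends_upto_totalD n f : depends_upto n f -> depends_upto n.+1 (D f).
Proof.
move=> df u v uv; rewrite /totalD; apply: eq_bigr => k _.
have [kn | nk] := leqP k n.
  rewrite uv //; congr (_ * _); apply: (depends_upto_partial k df) => i le_in.
  by apply: uv; exact: leq_trans le_in (leqnSn n).
by rewrite !(partial_eq0 _ df nk) !mulr0.
Qed.

Definition euler_lagrange N psi : jet -> R :=
  fun u => \sum_(j < N.+1) (-1) ^+ j * iter j D (partial j psi) u.

Lemma euler_lagrange_lin N h a b f g : smooth_pos f -> smooth_pos g ->
  {in pos_jet, h =1 (fun v => a * f v + b * g v)} ->
  {in pos_jet, euler_lagrange N h =1
     (fun v => a * euler_lagrange N f v + b * euler_lagrange N g v)}.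
Proof.
move=> sf sg hfg u pu; rewrite /euler_lagrange !mulr_sumr -big_split /=.
apply: eq_bigr => j _.
have Ej : {in pos_jet, partial j h =1 (fun v => a * partial j f v + b * partial j g v)}.
  move=> v pv; have dfj := smooth_pderivable (j := j) sf pv.
  have dgj := smooth_pderivable (j := j) sg pv.
  rewrite (eq_partial_pos j hfg pv).
  rewrite (partialD (pderivableZ (c := a) dfj) (pderivableZ (c := b) dgj)).
  by rewrite (partialZ a dfj) (partialZ b dgj).
rewrite (eq_iter_totalD_pos j Ej pu).
rewrite (iter_totalD_lin j a b (smooth_partial j sf) (smooth_partial j sg) pu); ring.
Qed.

(* The sum telescopes by [partialS_totalD]. *)
Lemma euler_lagrange_totalD N A : (N <= K)%N -> smooth_pos A ->
  (forall u, partial N A u = 0) -> {in pos_jet, euler_lagrange N (D A) =1 fun=> 0}.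
Proof.
move=> NK sA AN u pu; rewrite /euler_lagrange big_ord_recl.
pose Z i := (-1) ^+ i * iter i.+1 D (partial i A) u.
have Z0 : (-1) ^+ 0 * iter 0 D (partial 0 (D A)) u = Z 0%N.
  by rewrite /Z /= !expr0 !mul1r (partial0_totalD sA pu).
have ZS (j : 'I_N) : (-1) ^+ (lift ord0 j) * iter (lift ord0 j) D
    (partial (lift ord0 j) (D A)) u = Z j.+1 - Z j.
  have jK : (j < K)%N by apply: leq_trans (ltn_ord j) NK.
  rewrite lift0 (eq_iter_totalD_pos j.+1 (partialS_totalD jK sA) pu).
  rewrite (iter_totalD_add j.+1 (smooth_partial j sA)
    (smooth_totalD (smooth_partial j.+1 sA)) pu).
  by rewrite -iterSr /Z exprS; ring.
rewrite Z0 (eq_bigr _ (fun j _ => ZS j)).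
rewrite -(big_mkord xpredT (fun j => Z j.+1 - Z j)) telescope_sumr //.
have -> : Z N = 0.
  rewrite /Z; have -> : partial N A = fun=> 0 by apply: funext => v; exact: AN.
  by rewrite iter_totalD0 mulr0.
by rewrite sub0r subrr.
Qed.

(* [ibp j y = \sum_(i < j) (-1)^i u_(j-1-i) D^i y]: the boundary terms of
   [j] successive integrations by parts. *)
Fixpoint ibp (j : nat) (y : jet -> R) : jet -> R :=
  if j is j'.+1 then fun v => v j' * y v - ibp j' (D y) v else fun=> 0.

Lemma smooth_ibp j y : smooth_pos y -> smooth_pos (ibp j y).
Proof.
elim: j y => [|j IH] y sy /=; first exact: smooth_cst.
have -> : (fun v => v j * y v - ibp j (D y) v) =
    (fun v => v j * y v + (-1) * ibp j (D y) v).
  by apply: funext => v; ring.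
apply: smooth_add; first exact: smooth_coordM.
by apply: smooth_scale; apply: IH; exact: smooth_totalD.
Qed.

Lemma totalD_ibp j y : (j <= K)%N -> smooth_pos y ->
  {in pos_jet, D (ibp j y) =1 (fun v => v j * y v - (-1) ^+ j * (v 0%N * iter j D y v))}.
Proof.
elim: j y => [|j IH] y jK sy u pu.
  by have /= -> := iter_totalD0 1; rewrite expr0; ring.
have Ej : {in pos_jet, ibp j.+1 y =1 (fun v => 1 * (v j * y v) + (-1) * ibp j (D y) v)}.
  by move=> v _ /=; ring.
have := eq_iter_totalD_pos 1 Ej pu; rewrite /= => ->.
have sDy := smooth_totalD sy.
have := iter_totalD_lin 1 1 (-1) (smooth_coordM j sy) (smooth_ibp j sDy) pu.
rewrite /= => ->; rewrite (totalD_coordM jK sy pu) (IH (D y) (ltnW jK) sDy u pu).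
by rewrite -iterSr -iterS exprS; ring.
Qed.

Lemma depends_upto_ibp n j y : depends_upto n y -> depends_upto (n + j.-1) (ibp j y).
Proof.
elim: j n y => [//|j IH] n y dy u v uv /=.
have -> : u j = v j by apply: uv; lia.
have -> : y u = y v by apply: dy => i le_in; apply: uv; lia.
case: j IH uv => [//|j] IH uv; congr (_ - _).
by apply: (IH n.+1 _ (depends_upto_totalD dy)) => i le_in; apply: uv; lia.
Qed.

(* [partial j (u_0 S) = u_0 partial j S + [j == 0] S]. *)
Lemma L_op_euler_lagrange n S : smooth_pos S ->
  {in pos_jet, L_op K n S =1 (fun v => euler_lagrange n (fun w => w 0%N * S w) v - S v)}.
Proof.
move=> sS u pu; have su0S := smooth_coordM 0 sS.
have Ej j : {in pos_jet, (fun v => v 0%N * partial j S v) =1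
    (fun v => 1 * partial j (fun w => w 0%N * S w) v + (- (0%N == j)%:R) * S v)}.
  move=> v pv; rewrite (partialM (@pderivable_coord 0 j v) (smooth_pderivable sS pv)).
  by rewrite partial_coord; ring.
rewrite /L_op /euler_lagrange.
have -> : \sum_(j < n.+1) (-1) ^+ j * iter j D (fun v => v 0%N * partial j S v) u
   = \sum_(j < n.+1) ((-1) ^+ j * iter j D (partial j (fun v => v 0%N * S v)) u
      - (-1) ^+ j * ((0%N == j)%:R * iter j D S u)).
  apply: eq_bigr => j _; rewrite (eq_iter_totalD_pos j (Ej j) pu).
  by rewrite (iter_totalD_lin j 1 (- (0%N == j)%:R) (smooth_partial j su0S) sS pu); ring.
rewrite sumrB; congr (_ - _).
by rewrite big_ord_recl /= expr0 !mul1r big1 ?addr0 // => j _; rewrite mul0r mulr0.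
Qed.

Lemma Lambda_op_euler_lagrange N m phi : (m <= N)%N -> depends_upto m phi ->
  Lambda_op K m phi =1 (fun v => - euler_lagrange N phi v).
Proof.
move=> mN dphi u; rewrite /euler_lagrange.
rewrite -(big_mkord xpredT (fun j => (-1) ^+ j * iter j D (partial j phi) u)).
rewrite (@big_cat_nat _ _ _ m.+1) //= [X in _ + X]big_nat_cond [X in _ + X]big1 ?addr0.
  rewrite big_mkord /Lambda_op -sumrN; apply: eq_bigr => j _.
  by rewrite exprS; ring.
move=> j /andP[/andP[mj _] _].
have -> : partial j phi = fun=> 0 by apply: funext => v; exact: partial_eq0 dphi mj.
by rewrite iter_totalD0 mulr0.
Qed.

Definition Lambda_potential m phi : jet -> R :=
  fun v => \sum_(j < m.+1) ibp j (partial j phi) v.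

Lemma smooth_Lambda_op m phi : smooth_pos phi -> smooth_pos (Lambda_op K m phi).
Proof.
move=> sphi; apply: (@smooth_sum m.+1
  (fun j v => (-1) ^+ j.+1 * iter j D (partial j phi) v)) => j.
exact/smooth_scale/smooth_iter_totalD/smooth_partial.
Qed.

Lemma smooth_Lambda_potential m phi :
  smooth_pos phi -> smooth_pos (Lambda_potential m phi).
Proof.
move=> sphi; apply: (@smooth_sum m.+1 (fun j v => ibp j (partial j phi) v)) => j.
exact/smooth_ibp/smooth_partial.
Qed.

(* Sum [totalD_ibp] over [j] and use Euler's relation [phi = \sum_j u_j partial j phi]. *)
Lemma u0_Lambda_op m phi : (m <= K)%N -> smooth_pos phi -> euler_hom m phi ->
  {in pos_jet, (fun v => v 0%N * Lambda_op K m phi v) =1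
     (fun v => 1 * D (Lambda_potential m phi) v + (-1) * phi v)}.
Proof.
move=> mK sphi eh u pu; rewrite /= /Lambda_potential.
rewrite (totalD_sum m.+1 (fun j => smooth_ibp j (smooth_partial j sphi)) pu).
have jK (j : 'I_m.+1) : (j <= K)%N by apply: leq_trans mK; rewrite -ltnS.
rewrite (eq_bigr _ (fun j _ => totalD_ibp (jK j) (smooth_partial j sphi) pu)).
rewrite sumrB -(eh u pu) /Lambda_op mulr_sumr.
have -> : \sum_(j < m.+1) (-1) ^+ j * (u 0%N * iter j D (partial j phi) u) =
    - \sum_(j < m.+1) u 0%N * ((-1) ^+ j.+1 * iter j D (partial j phi) u).
  by rewrite -sumrN; apply: eq_bigr => j _; rewrite exprS; ring.
ring.
Qed.

Lemma partial_Lambda_potential m phi u : depends_upto m phi ->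
  partial (2 * m) (Lambda_potential m phi) u = 0.
Proof.
move=> dphi; apply: (@partial_eq0_shift (2 * m) (Lambda_potential m phi) u) => t.
rewrite /Lambda_potential.
apply: eq_bigr => -[[//|j] /= jm] _.
apply: (@depends_upto_shift (m + j) _ (ibp j.+1 (partial j.+1 phi))); last lia.
exact: (@depends_upto_ibp m j.+1 _ (depends_upto_partial j.+1 dphi)).
Qed.

End TotalDerivative.
End JetSpace.

Theorem mainTheorem10 (R : realType) (m K : nat) (phi : (nat -> R) -> R) :
  (4 * m <= K)%N ->
  depends_upto m phi ->
  smooth_pos phi ->
  euler_hom m phi ->
  forall u : (nat -> R), 0 < u 0%N ->
    L_op K (2 * m) (Lambda_op K m phi) u = 0.
Proof.
move=> mK dphi sphi eh u pu.
have m_le_K : (m <= K)%N by lia.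
have m2_le_K : (2 * m <= K)%N by lia.
have m_le_m2 : (m <= 2 * m)%N by lia.
have sA := smooth_Lambda_potential K m sphi.
have u0S := u0_Lambda_op m_le_K sphi eh.
have A2m v := partial_Lambda_potential K v dphi.
rewrite (L_op_euler_lagrange K (2 * m) (smooth_Lambda_op K m sphi) pu).
rewrite (euler_lagrange_lin K (2 * m) (smooth_totalD K sA) sphi u0S pu).
rewrite (euler_lagrange_totalD m2_le_K sA A2m pu).
by rewrite (Lambda_op_euler_lagrange K m_le_m2 dphi); ring.
Qed.
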